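(* For any natural number $i$, there is a symmetric positive definite $m\times m$ matrix $G_i$ such that (i) $G_i^{-1}g_i=\theta\tau_i\widehat{S}^{-1}g_i$, where $g_i=B^{T}x_{i+1}-Dy_i-g$ and $\tau_i=\frac{\langle g_i,\widehat S^{-1}g_i\rangle}{\langle (B^TA_s^{-1}B+D)\widehat S^{-1}g_i,\widehat S^{-1}g_i\rangle}$ if $g_i\neq 0$, $\tau_i=1$ if $g_i=0$; (ii) all eigenvalues of the matrix $G_i^{-1}H$ lie in the interval $[\theta(1-\beta_1),\theta(1+\beta_1)]$.
   Context: Consider the generalized saddle point system $\begin{bmatrix} A & B\\ B^{T} & -D\end{bmatrix}\begin{bmatrix} x\\ y\end{bmatrix}=\begin{bmatrix} f\\ g\end{bmatrix}$, where $A$ is an $n\times n$ (possibly nonsymmetric) invertible matrix whose symmetric part $A_s=\frac12(A+A^T)$ is positive definite, $B$ is an $n\times m$ matrix with $m\le n$, and $D$ is symmetric positive semidefinite; the Schur complement $B^TA^{-1}B+D$ is assumed nonsingular. Let $H=B^TA_s^{-1}B+D$ (assumed symmetric positive definite), let $\widehat S$ be a symmetric positive definite preconditioner for $H$, let $\kappa_1=\mathrm{cond}(\widehat S^{-1}H)$ and $\beta_1=\frac{\kappa_1-1}{\kappa_1+1}$, and let $\theta>0$. The iterates $(x_i,y_i)$ are those of the preconditioned exact Uzawa method: given $x_0,y_0$, for $i=0,1,2,\dots$, $x_{i+1}=x_i+A^{-1}(f-(Ax_i+By_i))$, $y_{i+1}=y_i+\theta\tau_i\widehat S^{-1}(B^Tx_{i+1}-Dy_i-g)$,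 with $\tau_i$ as defined in the claim (this choice minimizes $\|\tau_i\widehat S^{-1}g_i-H^{-1}g_i\|_H^2$). *)

From HB Require Import structures.
From mathcomp Require Import all_boot all_order all_algebra.
Set Implicit Arguments. Unset Strict Implicit. Unset Printing Implicit Defensive.
Import Order.TTheory GRing.Theory Num.Theory.
Local Open Scope ring_scope.

Section Defs.
Variable R : realFieldType.

Definition inner (k : nat) (u v : 'cV[R]_k) : R := (u^T *m v) 0 0.

Definition symmetric_mx (k : nat) (M : 'M[R]_k) : Prop := M^T = M.

Definition posdef_mx (k : nat) (M : 'M[R]_k) : Prop :=
  forall v : 'cV[R]_k, v != 0 -> 0 < inner v (M *m v).

Definition possemidef_mx (k : nat) (M : 'M[R]_k) : Prop :=
  forall v : 'cV[R]_k, 0 <= inner v (M *m v).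

Definition sym_part (k : nat) (A : 'M[R]_k) : 'M[R]_k := 2^-1 *: (A + A^T).

Definition uzawa_tau (m : nat) (H Sh : 'M[R]_m) (gi : 'cV[R]_m) : R :=
  if gi == 0 then 1
  else inner gi (invmx Sh *m gi) / inner (H *m (invmx Sh *m gi)) (invmx Sh *m gi).

Variables (n m : nat) (A : 'M[R]_n) (B : 'M[R]_(n, m)) (D Sh : 'M[R]_m)
  (f : 'cV[R]_n) (g : 'cV[R]_m) (theta : R).

Definition uzawa_H : 'M[R]_m := B^T *m invmx (sym_part A) *m B + D.

Definition uzawa_xnext (x : 'cV[R]_n) (y : 'cV[R]_m) : 'cV[R]_n :=
  x + invmx A *m (f - (A *m x + B *m y)).

Definition uzawa_res (x : 'cV[R]_n) (y : 'cV[R]_m) : 'cV[R]_m :=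
  B^T *m uzawa_xnext x y - D *m y - g.

Definition uzawa_step (p : 'cV[R]_n * 'cV[R]_m) : 'cV[R]_n * 'cV[R]_m :=
  let: (x, y) := p in
  let gi := uzawa_res x y in
  (uzawa_xnext x y, y + (theta * uzawa_tau uzawa_H Sh gi) *: (invmx Sh *m gi)).

Definition uzawa_iter (x0 : 'cV[R]_n) (y0 : 'cV[R]_m) (i : nat) :=
  iter i uzawa_step (x0, y0).

End Defs.

From HB Require Import structures.
From mathcomp Require Import all_boot all_order all_algebra.
From mathcomp Require Import ring lra.
From mathcomp.real_closed Require Import complex.
Import Order.TTheory GRing.Theory Num.Theory.
Local Open Scope ring_scope.
Set Implicit Arguments. Unset Strict Implicit. Unset Printing Implicit Defensive.

(* With w = Sh^-1 g_i and p = theta tau_i w, part (i) asks for a symmetric G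
   with G p = g_i.  Put c = 1 / (theta (1 - beta1^2)).  Kantorovich's
   inequality for the pencil (H, Sh), whose eigenvalues lie in [lmin, lmax],
   says exactly that the defect d = g_i - c H p satisfies
   |d|_(H^-1) <= beta1 c |p|_H.  Let E be H composed with the H-orthogonal
   reflection exchanging the H-unit vectors e = p / |p|_H and
   f = H^-1 d / |d|_(H^-1).  Then G = c H + (|d|_(H^-1) / |p|_H) E satisfies
   G p = c H p + d = g_i, and -H <= E <= H gives
   (1 - beta1) c H <= G <= (1 + beta1) c H, i.e. the eigenvalues of G^-1 H lie
   in [theta (1 - beta1), theta (1 + beta1)].  Kantorovich's inequality itself
   is the nonpositivity of (H - lmin Sh) H^-1 (H - lmax Sh), which is read off
   after diagonalising H and Sh simultaneously over R[i]. *)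

Section InnerProduct.
Variable R : realFieldType.
Implicit Types (k : nat).

Lemma innerC k (u v : 'cV[R]_k) : inner u v = inner v u.
Proof.
rewrite /inner; transitivity ((u^T *m v)^T 0 0); first by rewrite [RHS]mxE.
by rewrite trmx_mul trmxK.
Qed.

Lemma innerMr k l (u : 'cV[R]_k) (M : 'M[R]_(k, l)) v :
  inner u (M *m v) = inner (M^T *m u) v.
Proof. by rewrite /inner trmx_mul trmxK mulmxA. Qed.

Lemma inner_ge0 k (u : 'cV[R]_k) : 0 <= inner u u.
Proof. by rewrite /inner mxE; apply: sumr_ge0 => i _; rewrite mxE -expr2 sqr_ge0. Qed.

Lemma innerDl k (u v w : 'cV[R]_k) : inner (u + v) w = inner u w + inner v w.
Proof. by rewrite /inner linearD mulmxDl mxE. Qed.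

Lemma innerDr k (u v w : 'cV[R]_k) : inner w (u + v) = inner w u + inner w v.
Proof. by rewrite /inner mulmxDr mxE. Qed.

Lemma innerZl k a (u w : 'cV[R]_k) : inner (a *: u) w = a * inner u w.
Proof. by rewrite /inner linearZ -scalemxAl mxE. Qed.

Lemma innerZr k a (u w : 'cV[R]_k) : inner w (a *: u) = a * inner w u.
Proof. by rewrite /inner -scalemxAr mxE. Qed.

Lemma innerNl k (u w : 'cV[R]_k) : inner (- u) w = - inner u w.
Proof. by rewrite -scaleN1r innerZl mulN1r. Qed.

Lemma innerNr k (u w : 'cV[R]_k) : inner w (- u) = - inner w u.
Proof. by rewrite -scaleN1r innerZr mulN1r. Qed.

Lemma inner0l k (w : 'cV[R]_k) : inner 0 w = 0.
Proof. by rewrite -(scale0r 0) innerZl mul0r. Qed.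

Lemma inner0r k (w : 'cV[R]_k) : inner w 0 = 0.
Proof. by rewrite -(scale0r 0) innerZr mul0r. Qed.

Definition innerE :=
  (innerDl, innerDr, innerNl, innerNr, innerZl, innerZr, inner0l, inner0r).

Lemma symmetric_formC k (M : 'M[R]_k) (u v : 'cV[R]_k) : symmetric_mx M ->
  inner u (M *m v) = inner v (M *m u).
Proof. by move=> sM; rewrite innerMr sM innerC. Qed.

Lemma symmetric_invmx k (M : 'M[R]_k) : symmetric_mx M -> symmetric_mx (invmx M).
Proof. by rewrite /symmetric_mx trmx_inv => ->. Qed.

Lemma posdef_form_ge0 k (M : 'M[R]_k) (x : 'cV[R]_k) : posdef_mx M ->
  0 <= inner x (M *m x).
Proof. by move=> pM; have [->|/pM/ltW//] := eqVneq x 0; rewrite inner0l. Qed.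

Lemma posdef_unitmx k (M : 'M[R]_k) : posdef_mx M -> M \in unitmx.
Proof.
move=> pM; apply: contraT; rewrite unitmxE unitfE negbK -det_tr => /det0P[v v0 vM].
have /pM : v^T != 0 by rewrite trmx_eq0.
by rewrite -[M]trmxK -trmx_mul vM trmx0 inner0r ltxx.
Qed.

Lemma posdef_cauchy_schwarz k (M : 'M[R]_k) (u x : 'cV[R]_k) :
  symmetric_mx M -> posdef_mx M ->
  inner u (M *m x) ^+ 2 <= inner u (M *m u) * inner x (M *m x).
Proof.
move=> sM pM; have [->|u0] := eqVneq u 0; first by rewrite !inner0l expr0n mul0r.
have uMu := pM _ u0; set a := inner u (M *m u) in uMu *; set t := inner u (M *m x).
have form : inner (x - (t / a) *: u) (M *m (x - (t / a) *: u)) =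
            inner x (M *m x) - t ^+ 2 / a.
  rewrite mulmxBr -scalemxAr !innerE (symmetric_formC x u sM) -/t -/a.
  by field; rewrite lt0r_neq0.
have := posdef_form_ge0 (x - (t / a) *: u) pM.
by rewrite form subr_ge0 ler_pdivrMr // mulrC.
Qed.

Lemma eigenvalue_pencil k (G H : 'M[R]_k) a :
  posdef_mx G -> symmetric_mx G -> symmetric_mx H ->
  eigenvalue (invmx G *m H) a -> exists2 z : 'cV_k, z != 0 & H *m z = a *: (G *m z).
Proof.
move=> pG sG sH /eigenvalueP[v vGH v0]; have Gu := posdef_unitmx pG.
exists (invmx G *m v^T).
  apply: contra v0 => /eqP/(congr1 (mulmx G)); rewrite mulKVmx // mulmx0.
  by move/(congr1 trmx); rewrite trmxK trmx0 => ->.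
rewrite mulKVmx //; have := congr1 trmx vGH.
by rewrite !trmx_mul sH trmx_inv sG linearZ mulmxA.
Qed.

Lemma eigenvalue_pencil_gt0 k (G H : 'M[R]_k) a :
  posdef_mx G -> symmetric_mx G -> posdef_mx H -> symmetric_mx H ->
  eigenvalue (invmx G *m H) a -> 0 < a.
Proof.
move=> pG sG pH sH /(eigenvalue_pencil pG sG sH)[z z0 Hz].
by have := pH _ z0; rewrite Hz innerZr pmulr_lgt0 // pG.
Qed.

Lemma eigenvalue_pencil_bound k (G H : 'M[R]_k) (a b c : R) :
  posdef_mx G -> symmetric_mx G -> symmetric_mx H ->
  (forall x, x != 0 ->
     a * inner x (G *m x) <= inner x (H *m x) <= b * inner x (G *m x)) ->
  eigenvalue (invmx G *m H) c -> a <= c <= b.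
Proof.
move=> pG sG sH GH /(eigenvalue_pencil pG sG sH)[z z0 Hz].
have zGz := pG _ z0; have := GH _ z0.
by rewrite Hz innerZr !ler_pM2r.
Qed.

End InnerProduct.

Section Hermitian.
Local Open Scope sesquilinear_scope.
Variable C : numClosedFieldType.
Implicit Types (k : nat).

Lemma trmxC_mul k l p (A : 'M[C]_(k, l)) (B : 'M[C]_(l, p)) :
  (A *m B)^t* = B^t* *m A^t*.
Proof. by rewrite trmx_mul map_mxM. Qed.

Lemma trmxC_diag k (d : 'rV[C]_k) :
  (forall j, d 0 j \is Num.real) -> (diag_mx d)^t* = diag_mx d.
Proof.
move=> dR; apply/matrixP=> i j; rewrite !mxE.
by have [->|] := eqVneq i j; rewrite ?mulr1n ?conj_Creal ?mulr0n ?conjC0.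
Qed.

Lemma diag_mx_delta k (d : 'rV[C]_k) j :
  diag_mx d *m delta_mx j (0 : 'I_1) = d 0 j *: delta_mx j 0.
Proof.
apply/matrixP=> i l; rewrite mul_diag_mx !mxE.
by have [->|] := eqVneq i j; rewrite ?mulr1 ?mulr0.
Qed.

Lemma hermitian_spectral k (S : 'M[C]_k) : S^t* = S ->
  let U := spectralmx S in let d := spectral_diag S in
  [/\ U \is unitarymx, S = U^t* *m diag_mx d *m U & forall j, d 0 j \is Num.real].
Proof.
move=> SH U d; have Sh : S \is hermsymmx.
  by apply/is_hermitianmxP; rewrite expr0 scale1r SH.
have Uu : U \is unitarymx by apply: spectral_unitarymx.
split=> //; first by rewrite -invmx_unitary //; apply/orthomx_spectralP/hermitian_normalmx.
by move=> j; have /mxOverP := hermitian_spectral_diag_real Sh; apply.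
Qed.

Section PositiveHermitian.
Variables (k : nat) (S : 'M[C]_k).
Hypotheses (SH : S^t* = S)
  (S_gt0 : forall (x : 'cV_k) (d : C),
      x != 0 -> d \is Num.real -> S *m x = d *: x -> 0 < d).

Lemma hermitian_congr1 : exists P : 'M[C]_k, P^t* *m S *m P = 1%:M.
Proof.
have [Uu SE dR] := hermitian_spectral SH.
set U := spectralmx S in Uu SE; set d := spectral_diag S in SE dR.
have UUt := unitarymxP Uu.
have d_gt0 j : 0 < d 0 j.
  have ej0 : U^t* *m delta_mx j (0 : 'I_1) != 0.
    apply: contraTneq isT => /(congr1 (mulmx U)); rewrite mulmxA UUt mul1mx mulmx0.
    by move/matrixP/(_ j 0); rewrite !mxE !eqxx => /eqP; rewrite oner_eq0.
  apply: (S_gt0 ej0 (dR j)).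
  by rewrite [in LHS]SE -!mulmxA (mulmxA U) UUt mul1mx diag_mx_delta scalemxAr.
pose r := \row_j (sqrtC (d 0 j))^-1.
have rR j : r 0 j \is Num.real.
  by rewrite mxE; apply: ger0_real; rewrite invr_ge0 sqrtC_ge0 ltW.
exists (U^t* *m diag_mx r).
rewrite trmxC_mul trmxC_diag // trmxCK SE !mulmxA mulmxtVK // -!mulmxA.
rewrite (mulmxA U) UUt mul1mx !mulmx_diag; apply/matrixP=> i j; rewrite !mxE.
have [<-|] := eqVneq j i; rewrite ?mulr0n // !mulr1n.
have sd0 : sqrtC (d 0 j) != 0 by rewrite sqrtC_eq0 lt0r_neq0.
have {2}-> : d 0 j = sqrtC (d 0 j) * sqrtC (d 0 j) by rewrite -expr2 sqrtCK.
by field.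
Qed.

Lemma hermitian_simdiag (H : 'M[C]_k) : H^t* = H ->
  exists V : 'M[C]_k, exists lam : 'rV[C]_k,
    [/\ V^t* *m S *m V = 1%:M, V^t* *m H *m V = diag_mx lam
       & forall j, lam 0 j \is Num.real].
Proof.
move=> HH; have [P PSP] := hermitian_congr1; pose T := P^t* *m H *m P.
have TH : T^t* = T by rewrite /T !trmxC_mul trmxCK HH mulmxA.
have [Wu TE lamR] := hermitian_spectral TH.
set W := spectralmx T in Wu TE; set lam := spectral_diag T in TE lamR.
have WWt := unitarymxP Wu.
exists (P *m W^t*), lam; split=> //; rewrite trmxC_mul trmxCK.
  by rewrite !mulmxA -(mulmxA W) -(mulmxA W) PSP mulmx1 WWt.
have -> : W *m P^t* *m H *m (P *m W^t*) = W *m T *m W^t* by rewrite /T !mulmxA.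
by rewrite TE !mulmxA WWt mul1mx -mulmxA WWt mulmx1.
Qed.

End PositiveHermitian.

Section Congruence.
Variables (k : nat) (S H V : 'M[C]_k) (lam : 'rV[C]_k).
Hypotheses (VSV : V^t* *m S *m V = 1%:M) (VHV : V^t* *m H *m V = diag_mx lam).

Lemma congr_diag_eigenvector j (x := V *m delta_mx j (0 : 'I_1)) :
  x != 0 /\ H *m x = lam 0 j *: (S *m x).
Proof.
have [VSu Vu] := mulmx1_unit VSV.
have Vtu : V^t* \in unitmx by move: VSu; rewrite unitmx_mul => /andP[].
have HV : H *m V = S *m V *m diag_mx lam.
  by apply: (can_inj (mulKmx Vtu)); rewrite !mulmxA VHV VSV mul1mx.
split; last by rewrite /x mulmxA HV -mulmxA diag_mx_delta -scalemxAr mulmxA.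
apply: contraTneq isT => /(congr1 (mulmx (invmx V))); rewrite mulKmx // mulmx0.
by move/matrixP/(_ j 0); rewrite !mxE !eqxx => /eqP; rewrite oner_eq0.
Qed.

Lemma congr_diag_invmx : (forall j, lam 0 j != 0) ->
  V^t* *m (S *m invmx H *m S) *m V = diag_mx (\row_j (lam 0 j)^-1).
Proof.
move=> lam0; set Dinv := diag_mx _.
have LD : diag_mx lam *m Dinv = 1%:M.
  rewrite mulmx_diag; apply/matrixP=> i j; rewrite !mxE.
  by have [->|] := eqVneq i j; rewrite ?mulr0n // !mulr1n mulfV.
have [_ Vu] := mulmx1_unit VSV.
have VVtS : V *m V^t* *m S = 1%:M.
  by apply: (can_inj (mulmxK Vu)); rewrite mul1mx -!mulmxA (mulmxA (V^t*)) VSV mulmx1.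
have [_ Su] := mulmx1_unit VVtS.
have SVVt : S *m (V *m V^t*) = 1%:M.
  have -> : V *m V^t* = invmx S by rewrite -[LHS]mulmx1 -(mulmxV Su) mulmxA VVtS mul1mx.
  exact: mulmxV.
have Hu : H \in unitmx.
  have : V^t* *m H *m V *m Dinv = 1%:M by rewrite VHV LD.
  by case/mulmx1_unit; rewrite !unitmx_mul => /andP[/andP[_ ->]].
rewrite -[LHS]mulmx1 -LD -VHV mulmxA.
have -> : V^t* *m (S *m invmx H *m S) *m V *m (V^t* *m H *m V) =
          V^t* *m S *m invmx H *m (S *m (V *m V^t*)) *m H *m V by rewrite !mulmxA.
by rewrite SVVt mulmx1 mulmxKV // VSV mul1mx.
Qed.

Lemma congr_diag_pencil_form_le0 (l L : C) : 0 < l ->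
  (forall j, l <= lam 0 j <= L) -> forall x : 'cV[C]_k,
  (x^t* *m ((H - (l + L) *: S + (l * L) *: (S *m invmx H *m S)) *m x)) 0 0 <= 0.
Proof.
move=> l_gt0 lamB x; have lam_gt0 j : 0 < lam 0 j.
  by case/andP: (lamB j) => /(lt_le_trans l_gt0).
pose mu := \row_j ((lam 0 j - l) * (lam 0 j - L) / lam 0 j).
have VNV : V^t* *m (H - (l + L) *: S + (l * L) *: (S *m invmx H *m S)) *m V =
           diag_mx mu.
  rewrite !mulmxDr !mulmxDl -!scalemxAr -!scalemxAl mulmxN mulNmx -scalemxAr.
  rewrite -scalemxAl congr_diag_invmx => [|j]; last by rewrite lt0r_neq0.
  rewrite VHV VSV; apply/matrixP=> i j; rewrite !mxE.
  have [->|] := eqVneq i j; last by rewrite !mulr0n !mulr0 subr0 addr0.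
  by rewrite !mulr1n mulr1; field; rewrite lt0r_neq0.
have mu_le0 j : mu 0 j <= 0.
  case/andP: (lamB j) => lj jL; rewrite mxE pmulr_lle0 ?invr_gt0 //.
  by rewrite mulr_ge0_le0 ?subr_ge0 ?subr_le0.
have [_ Vu] := mulmx1_unit VSV.
set N := H - _ + _ in VNV *.
rewrite -[x](mulKVmx Vu) trmxC_mul -!mulmxA (mulmxA (V^t*)) (mulmxA (V^t* *m _)) VNV.
rewrite mxE; apply: sumr_le0 => i _; rewrite mul_diag_mx !mxE mulrCA.
apply: mulr_le0_ge0; first by have := mu_le0 i; rewrite mxE.
by rewrite mulrC mul_conjC_ge0.
Qed.

End Congruence.

End Hermitian.

Section Complexification.
Local Open Scope sesquilinear_scope.
Variable R : rcfType.
Implicit Types (k : nat).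
Local Notation C := R[i].
Local Notation toC := (real_complex R).

Lemma trmxC_map_real k l (M : 'M[R]_(k, l)) : (map_mx toC M)^t* = map_mx toC M^T.
Proof. by apply/matrixP=> i j; rewrite !mxE conj_Creal ?complex_real. Qed.

Lemma eigenvalue_map_real k (M : 'M[R]_k) (z : 'rV[C]_k) (a : R) :
  z != 0 -> z *m map_mx toC M = toC a *: z -> eigenvalue M a.
Proof.
move=> z0 zM; rewrite eigenvalue_root_char -(fmorph_root toC) map_char_poly.
by rewrite -eigenvalue_root_char; apply/eigenvalueP; exists z.
Qed.

Lemma posdef_map_real_eigen_gt0 k (S : 'M[R]_k) :
  posdef_mx S -> symmetric_mx S -> forall (x : 'cV[C]_k) (d : C),
  x != 0 -> d \is Num.real -> map_mx toC S *m x = d *: x -> 0 < d.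
Proof.
move=> pS sS x _ x0 /complex_realP[a ->] Sx.
have /eigenvalueP[v vS v0] : eigenvalue S a.
  apply: (eigenvalue_map_real (z := x^T)); first by rewrite trmx_eq0.
  have tS : (map_mx toC S)^T = map_mx toC S by rewrite map_trmx sS.
  by rewrite -tS -trmx_mul Sx linearZ.
have /pS : v^T != 0 by rewrite trmx_eq0.
rewrite -sS -trmx_mul vS linearZ innerZr -(rmorph0 toC) ltcR; apply: contraLR.
by rewrite -!leNgt => a_le0; rewrite mulr_le0_ge0 ?inner_ge0.
Qed.

Lemma kantorovich_form_le0 k (S H : 'M[R]_k) (l L : R) :
  posdef_mx S -> symmetric_mx S -> symmetric_mx H -> 0 < l ->
  (forall a, eigenvalue (invmx S *m H) a -> l <= a <= L) -> forall w : 'cV[R]_k,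
  inner w ((H - (l + L) *: S + (l * L) *: (S *m invmx H *m S)) *m w) <= 0.
Proof.
move=> pS sS sH l_gt0 SHB w.
set S' := map_mx toC S; set H' := map_mx toC H.
have S'H : S'^t* = S' by rewrite trmxC_map_real sS.
have H'H : H'^t* = H' by rewrite trmxC_map_real sH.
have [V [lam [VSV VHV lamR]]] :=
  hermitian_simdiag S'H (posdef_map_real_eigen_gt0 pS sS) H'H.
have lamB j : toC l <= lam 0 j <= toC L.
  have [x0 Hx] := congr_diag_eigenvector VSV VHV j.
  set x := V *m _ in x0 Hx; have /complex_realP[a lam_a] := lamR j.
  have S'u : S' \in unitmx by rewrite map_unitmx posdef_unitmx.
  suff /SHB : eigenvalue (invmx S *m H) a by rewrite lam_a !lecR.
  apply: (eigenvalue_map_real (z := x^T *m S')).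
    by rewrite mulmx_free_eq0 ?row_free_unit // trmx_eq0.
  have tS' : S'^T = S' by rewrite map_trmx sS.
  have tH' : H'^T = H' by rewrite map_trmx sH.
  rewrite map_mxM map_invmx -/S' -/H' mulmxA mulmxK // -tH' -trmx_mul Hx.
  by rewrite linearZ /= [(S' *m x)^T]trmx_mul tS' lam_a.
have := congr_diag_pencil_form_le0 VSV VHV _ lamB (map_mx toC w).
rewrite -(rmorph0 toC) ltcR trmxC_map_real => /(_ l_gt0).
have -> : H' - (toC l + toC L) *: S' + (toC l * toC L) *: (S' *m invmx H' *m S') =
          map_mx toC (H - (l + L) *: S + (l * L) *: (S *m invmx H *m S)).
  by rewrite map_mxD map_mxB !map_mxZ !map_mxM map_invmx rmorphD rmorphM.
by rewrite -!map_mxM mxE lecR /inner mulmxA.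
Qed.

End Complexification.

Lemma kantorovich (R : rcfType) k (S H : 'M[R]_k) (l L : R) :
  posdef_mx S -> symmetric_mx S -> posdef_mx H -> symmetric_mx H -> 0 < l -> l <= L ->
  (forall a, eigenvalue (invmx S *m H) a -> l <= a <= L) -> forall w : 'cV[R]_k,
  4 * l * L * inner (S *m w) (invmx H *m (S *m w)) * inner w (H *m w) <=
    ((l + L) * inner w (S *m w)) ^+ 2.
Proof.
move=> pS sS pH sH l_gt0 lL SHB w.
have := kantorovich_form_le0 pS sS sH l_gt0 SHB w.
rewrite mulmxDl mulmxBl -!scalemxAl !innerE -!mulmxA.
rewrite [inner w (S *m (_ *m _))]innerMr sS.
set Y := inner (S *m w) _; set h := inner w _; set q := inner w _ => form_le0.
have Y_ge0 : 0 <= Y.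
  by rewrite /Y -{1}(mulKVmx (posdef_unitmx pH) (S *m w)) innerC posdef_form_ge0.
have h_ge0 : 0 <= h by apply: posdef_form_ge0.
have hY_ge0 : 0 <= h + l * L * Y.
  by rewrite addr_ge0 // !mulr_ge0 // ltW // (lt_le_trans l_gt0).
apply: (le_trans (y := (h + l * L * Y) ^+ 2)).
  by rewrite -subr_ge0 (_ : _ - _ = (h - l * L * Y) ^+ 2) ?sqr_ge0 //; ring.
by rewrite lerXn2r ?nnegrE ?(le_trans hY_ge0) //; lra.
Qed.

Section Reflection.
Variables (R : realFieldType) (k : nat) (H : 'M[R]_k).
Hypotheses (pH : posdef_mx H) (sH : symmetric_mx H).

(* [H *m R_u], where [R_u = 1 - 2 u u^T H / <u, H u>] is the H-orthogonal
   reflection along [u]; for [u = 0] the junk value [0^-1 = 0] gives [H]. *)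
Definition hreflect_mx (u : 'cV[R]_k) : 'M[R]_k :=
  H - ((inner u (H *m u))^-1 * 2) *: ((H *m u) *m (H *m u)^T).

Lemma rank1_mulmx (u x : 'cV[R]_k) :
  (H *m u) *m (H *m u)^T *m x = inner u (H *m x) *: (H *m u).
Proof. by rewrite -mulmxA [_^T *m x]mx11_scalar mul_mx_scalar innerMr sH. Qed.

Lemma hreflect_mx_sym u : symmetric_mx (hreflect_mx u).
Proof.
by rewrite /symmetric_mx /hreflect_mx linearB linearZ /= trmx_mul trmxK sH.
Qed.

Lemma hreflect_mx_form u x :
  - inner x (H *m x) <= inner x (hreflect_mx u *m x) <= inner x (H *m x).
Proof.
rewrite mulmxBl -scalemxAl rank1_mulmx !innerE (symmetric_formC x u sH).
set t := inner u (H *m x).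
have tu_bound : 0 <= (inner u (H *m u))^-1 * t ^+ 2 <= inner x (H *m x).
  have := posdef_form_ge0 u pH; rewrite le_eqVlt => /orP[/eqP<-|uHu].
    by rewrite invr0 mul0r lexx posdef_form_ge0.
  rewrite mulrC divr_ge0 ?sqr_ge0 ?(ltW uHu) //= ler_pdivrMr // mulrC.
  exact: posdef_cauchy_schwarz.
have -> : (inner u (H *m u))^-1 * 2 * (t * t) = 2 * ((inner u (H *m u))^-1 * t ^+ 2).
  by ring.
by apply/andP; split; lra.
Qed.

Lemma hreflect_mx_swap (e f : 'cV[R]_k) :
  inner e (H *m e) = 1 -> inner f (H *m f) = 1 -> hreflect_mx (e - f) *m e = H *m f.
Proof.
move=> eHe fHf; set u := e - f; set s := inner e (H *m f).
rewrite mulmxBl -scalemxAl rank1_mulmx.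
have uHe : inner u (H *m e) = 1 - s by rewrite !innerE eHe (symmetric_formC f e sH).
have uHu : inner u (H *m u) = 2 * (1 - s).
  rewrite mulmxBr !innerE eHe fHf (symmetric_formC f e sH) -/s; ring.
have [s1|s1] := eqVneq s 1.
  have u0 : u = 0 by apply/eqP; apply: contraT => /pH; rewrite uHu s1 subrr mulr0 ltxx.
  have ef : e = f by apply/eqP; rewrite -subr_eq0 -/u u0.
  by rewrite u0 mulmx0 inner0l invr0 !mul0r scale0r subr0 ef.
rewrite uHe uHu scalerA (_ : _ * _ * _ = 1); last by field; rewrite subr_eq0 eq_sym.
by rewrite scale1r -mulmxBr /u opprB addrC subrK.
Qed.

End Reflection.

Lemma sym_secant_pencil (R : rcfType) k (H : 'M[R]_k) (p r : 'cV[R]_k) (c b : R) :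
  posdef_mx H -> symmetric_mx H -> 0 <= b ->
  let d := r - c *: (H *m p) in
  inner d (invmx H *m d) <= b ^+ 2 * inner p (H *m p) ->
  exists G : 'M[R]_k, [/\ symmetric_mx G, G *m p = r &
    forall x, (c - b) * inner x (H *m x) <= inner x (G *m x) <= (c + b) * inner x (H *m x)].
Proof.
move=> pH sH b_ge0 d d_le; have Hu := posdef_unitmx pH.
have dHd_ge0 : 0 <= inner d (invmx H *m d).
  by rewrite -{1}(mulKVmx Hu d) innerC posdef_form_ge0.
set np := Num.sqrt (inner p (H *m p)); set nd := Num.sqrt (inner d (invmx H *m d)).
have nd_le : nd <= b * np.
  rewrite -[b * np](_ : Num.sqrt (b ^+ 2 * inner p (H *m p)) = _); last first.
    by rewrite sqrtrM ?sqr_ge0 // sqrtr_sqr ger0_norm.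
  by rewrite ler_sqrt // mulr_ge0 ?sqr_ge0 ?posdef_form_ge0.
set s := nd / np; set e := np^-1 *: p; set f := nd^-1 *: (invmx H *m d).
have s_ge0 : 0 <= s by rewrite divr_ge0 ?sqrtr_ge0.
have s_le : s <= b.
  have [np0|np0] := eqVneq np 0; first by rewrite /s np0 invr0 mulr0.
  by rewrite ler_pdivrMr // lt_def np0 sqrtr_ge0.
exists (c *: H + s *: hreflect_mx H (e - f)); split.
- by rewrite /symmetric_mx linearD !linearZ /= sH hreflect_mx_sym.
- rewrite mulmxDl -!scalemxAl.
  have [nd0|nd_neq0] := eqVneq nd 0.
    have Hd0 : invmx H *m d = 0.
      apply: contra_eq nd0 => /pH dHd_gt0.
      by rewrite /nd sqrtr_eq0 -ltNge -{1}(mulKVmx Hu d) innerC.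
    have -> : s = 0 by rewrite /s nd0 mul0r.
    rewrite scale0r addr0; apply/eqP; rewrite eq_sym -subr_eq0 -/d.
    by rewrite -(mulKVmx Hu d) Hd0 mulmx0.
  have nd_gt0 : 0 < nd by rewrite lt_def nd_neq0 sqrtr_ge0.
  have np_gt0 : 0 < np.
    rewrite lt_def sqrtr_ge0 andbT; apply: contraTneq nd_le => ->.
    by rewrite mulr0 -ltNge.
  have np2 : np ^+ 2 = inner p (H *m p) by rewrite sqr_sqrtr ?posdef_form_ge0.
  have nd2 : nd ^+ 2 = inner d (invmx H *m d) by rewrite sqr_sqrtr.
  have eHe : inner e (H *m e) = 1.
    rewrite /e -scalemxAr innerZl innerZr mulrA -expr2 exprVn -np2.
    by rewrite mulVf // expf_neq0 // lt0r_neq0.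
  have fHf : inner f (H *m f) = 1.
    rewrite /f -scalemxAr innerZl innerZr mulKVmx // innerC mulrA -expr2 exprVn.
    by rewrite -nd2 mulVf // expf_neq0.
  have pe : p = np *: e by rewrite /e scalerA mulfV ?scale1r // lt0r_neq0.
  rewrite [in hreflect_mx _ _ *m p]pe -scalemxAr hreflect_mx_swap // scalerA.
  rewrite /s mulfVK ?lt0r_neq0 // /f -scalemxAr scalerA mulfV // scale1r mulKVmx //.
  by rewrite /d addrC subrK.
- move=> x; have /andP[EX_ge XE_le] := hreflect_mx_form pH sH (e - f) x.
  rewrite mulmxDl -!scalemxAl !innerE.
  set X := inner x (H *m x) in EX_ge XE_le *; set Y := inner x (_ *m x) in EX_ge XE_le *.
  have X_ge0 : 0 <= X := posdef_form_ge0 x pH.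
  have sY_le : s * Y <= b * X.
    by apply: (le_trans (ler_wpM2l s_ge0 XE_le)); rewrite ler_wpM2r.
  have sY_ge : - (b * X) <= s * Y.
    rewrite -mulNr; apply: le_trans (ler_wpM2l s_ge0 EX_ge).
    by rewrite mulrN mulNr lerN2 ler_wpM2r.
  by apply/andP; split; lra.
Qed.

Section UzawaPreconditioner.
Variables (R : rcfType) (k : nat) (H S : 'M[R]_k) (gi : 'cV[R]_k) (theta beta : R).
Hypotheses (pH : posdef_mx H) (sH : symmetric_mx H) (pS : posdef_mx S) (sS : symmetric_mx S)
  (theta_gt0 : 0 < theta) (beta_ge0 : 0 <= beta) (beta_lt1 : beta < 1).
Local Notation w := (invmx S *m gi).
Hypothesis kantorovich_gi :
  (1 - beta ^+ 2) * inner gi (invmx H *m gi) * inner w (H *m w) <= inner w gi ^+ 2.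

Let c := (theta * (1 - beta ^+ 2))^-1.
Let p := (theta * uzawa_tau H S gi) *: w.

Fact beta2_gt0 : 0 < 1 - beta ^+ 2.
Proof. by rewrite subr_gt0 expr_lt1. Qed.

Lemma uzawa_defect_bound (d := gi - c *: (H *m p)) :
  inner d (invmx H *m d) <= (beta * c) ^+ 2 * inner p (H *m p).
Proof.
have [gi0|gi_neq0] := eqVneq gi 0.
  by rewrite /d /p gi0 mulmx0 scaler0 mulmx0 scaler0 subr0 !inner0l mulr0.
have w_neq0 : w != 0.
  by apply: contra gi_neq0 => /eqP w0; rewrite -(mulKVmx (posdef_unitmx pS) gi) w0 mulmx0.
have h_gt0 : 0 < inner w (H *m w) by exact: pH.
have Hu := posdef_unitmx pH.
rewrite /d /p /uzawa_tau (negbTE gi_neq0) -!scalemxAr mulmxBr -!scalemxAr mulKmx //.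
rewrite !innerE [inner (H *m w) w]innerC [inner (H *m w) _]innerMr.
rewrite (symmetric_invmx sH) mulKmx // [inner gi w]innerC.
set Y := inner gi _; set h := inner w (H *m w); set q := inner w gi.
have b2_gt0 := beta2_gt0.
rewrite -subr_le0; set lhs := (X in X <= 0).
have -> : lhs = ((1 - beta ^+ 2) * Y * h - q ^+ 2) / ((1 - beta ^+ 2) * h).
  rewrite /lhs /c; field.
  by rewrite !lt0r_neq0.
by rewrite mulr_le0_ge0 ?subr_le0 // invr_ge0 mulr_ge0 ?ltW.
Qed.

Lemma uzawa_preconditioner : exists G : 'M[R]_k,
  [/\ symmetric_mx G, posdef_mx G, invmx G *m gi = (theta * uzawa_tau H S gi) *: w &
      forall a, eigenvalue (invmx G *m H) a ->
        theta * (1 - beta) <= a <= theta * (1 + beta)].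
Proof.
have b2_gt0 := beta2_gt0.
have bc_ge0 : 0 <= beta * c by rewrite mulr_ge0 // invr_ge0 mulr_ge0 ?ltW.
have [G [sG Gp GH]] := sym_secant_pencil pH sH bc_ge0 uzawa_defect_bound.
have lo : theta * (1 + beta) * (c - beta * c) = 1 by rewrite /c; field; rewrite !lt0r_neq0.
have hi : theta * (1 - beta) * (c + beta * c) = 1 by rewrite /c; field; rewrite !lt0r_neq0.
have c_gt0 : 0 < c by rewrite invr_gt0 mulr_gt0.
have lo_gt0 : 0 < c - beta * c by rewrite -{1}[c]mul1r -mulrBl mulr_gt0 ?subr_gt0.
have pG : posdef_mx G.
  move=> x x0; apply: lt_le_trans (mulr_gt0 lo_gt0 (pH x0)) _.
  by case/andP: (GH x).
have Gu := posdef_unitmx pG.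
exists G; split=> //; first by rewrite -{1}Gp mulKmx.
move=> a; apply: eigenvalue_pencil_bound => // x x0; have /andP[GHl GHu] := GH x.
have xHx := posdef_form_ge0 x pH.
have t_lo : 0 <= theta * (1 + beta) by rewrite mulr_ge0 ?addr_ge0 // ltW.
have t_hi : 0 <= theta * (1 - beta) by rewrite mulr_ge0 // ?subr_ge0 ltW.
apply/andP; split.
  rewrite [X in _ <= X](_ : _ = theta * (1 - beta) * ((c + beta * c) * inner x (H *m x))).
    exact: ler_wpM2l.
  by rewrite mulrA hi mul1r.
rewrite [X in X <= _](_ : _ = theta * (1 + beta) * ((c - beta * c) * inner x (H *m x))).
  exact: ler_wpM2l.
by rewrite mulrA lo mul1r.
Qed.

End UzawaPreconditioner.

Lemma cond_beta_bounds (R : realFieldType) (l L : R) : 0 < l -> l <= L ->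
  let beta := (L / l - 1) / (L / l + 1) in
  [/\ 0 <= beta, beta < 1 & 1 - beta ^+ 2 = 4 * l * L / (l + L) ^+ 2].
Proof.
move=> l_gt0 lL beta; have k1 : 1 <= L / l by rewrite ler_pdivlMr // mul1r.
have k1_gt0 : 0 < L / l + 1 by lra.
split; first by rewrite divr_ge0 ?subr_ge0 // ltW.
  by rewrite ltr_pdivrMr // mul1r; lra.
rewrite /beta; field; rewrite !lt0r_neq0 //; lra.
Qed.

Unset Implicit Arguments. Set Strict Implicit.

Theorem lemma2p2 (R : rcfType) (n m : nat)
  (A : 'M[R]_n) (B : 'M[R]_(n, m)) (D Sh : 'M[R]_m)
  (f : 'cV[R]_n) (g : 'cV[R]_m) (theta : R)
  (x0 : 'cV[R]_n) (y0 : 'cV[R]_m)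
  (lmin lmax : R) :
  (m <= n)%N ->
  A \in unitmx ->
  posdef_mx (sym_part A) ->
  symmetric_mx D -> possemidef_mx D ->
  B^T *m invmx A *m B + D \in unitmx ->
  symmetric_mx (uzawa_H A B D) -> posdef_mx (uzawa_H A B D) ->
  symmetric_mx Sh -> posdef_mx Sh ->
  0 < theta ->
  (* lmin, lmax: the smallest and largest eigenvalues of Sh^{-1} H *)
  eigenvalue (invmx Sh *m uzawa_H A B D) lmin ->
  eigenvalue (invmx Sh *m uzawa_H A B D) lmax ->
  (forall a, eigenvalue (invmx Sh *m uzawa_H A B D) a -> lmin <= a <= lmax) ->
  let kappa1 := lmax / lmin in
  let beta1 := (kappa1 - 1) / (kappa1 + 1) in
  forall i : nat,
  let xi := (uzawa_iter A B D Sh f g theta x0 y0 i).1 in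
  let yi := (uzawa_iter A B D Sh f g theta x0 y0 i).2 in
  let gi := uzawa_res A B D f g xi yi in
  let taui := uzawa_tau (uzawa_H A B D) Sh gi in
  exists G : 'M[R]_m,
    [/\ symmetric_mx G, posdef_mx G,
        invmx G *m gi = (theta * taui) *: (invmx Sh *m gi) &
        forall a, eigenvalue (invmx G *m uzawa_H A B D) a ->
          theta * (1 - beta1) <= a <= theta * (1 + beta1)].
Proof.
move=> _ _ _ _ _ _ sH pH sS pS theta_gt0 lmin_eig lmax_eig SHB kappa1 beta1 i xi yi gi taui.
set H := uzawa_H A B D in sH pH lmin_eig lmax_eig SHB taui *.
have lmin_gt0 := eigenvalue_pencil_gt0 pS sS pH sH lmin_eig.
have lminmax : lmin <= lmax by case/andP: (SHB _ lmax_eig).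
have [beta_ge0 beta_lt1 beta2E] := cond_beta_bounds lmin_gt0 lminmax.
apply: uzawa_preconditioner => //.
have := kantorovich pS sS pH sH lmin_gt0 lminmax SHB (invmx Sh *m gi).
rewrite mulKVmx ?posdef_unitmx // -/beta1 beta2E exprMn.
set s := (lmin + lmax) ^+ 2; set a := 4 * lmin * lmax => kanto.
have s_gt0 : 0 < s by rewrite exprn_gt0 // addr_gt0 // (lt_le_trans lmin_gt0).
by rewrite [a / s]mulrC -2!mulrA ler_pdivrMl // mulrA.
Qed.
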